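(* Let $p>1$ and let $\varphi:\mathbb{R}^n\to\mathbb{R}\cup\{+\infty\}$ be proper and lower semicontinuous. The following are equivalent: (a) $\varphi$ is high-order prox-bounded with order $p$; (b) there exists $\ell>0$ such that $\varphi(\cdot)+\ell\|\cdot\|^p$ is bounded from below on $\mathbb{R}^n$; (c) $\liminf_{\|x\|\to\infty}\frac{\varphi(x)}{\|x\|^p}>-\infty$.
   Context: For $p>1$, $\gamma>0$, the high-order Moreau envelope of $\varphi$ is $\varphi^p_\gamma(x):=\inf_{y\in\mathbb{R}^n}\big(\varphi(y)+\frac{1}{p\gamma}\|x-y\|^p\big)$. The function $\varphi$ is called high-order prox-bounded with order $p$ if there exist $\gamma>0$ and $x\in\mathbb{R}^n$ with $\varphi^p_\gamma(x)>-\infty$. $\|\cdot\|$ is the Euclidean norm. *)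

From HB Require Import structures.
From mathcomp Require Import all_boot all_order all_algebra.
From mathcomp Require Import all_classical all_reals all_analysis.
Set Implicit Arguments. Unset Strict Implicit. Unset Printing Implicit Defensive.
Import Order.TTheory GRing.Theory Num.Theory.
Import numFieldNormedType.Exports.
Local Open Scope classical_set_scope.
Local Open Scope ring_scope.

Definition enorm {R : realType} {n : nat} (x : 'rV[R]_n) : R :=
  Num.sqrt (\sum_(i < n) x ord0 i ^+ 2).

Definition proper_fun {R : realType} {n : nat} (phi : 'rV[R]_n -> \bar R) : Prop :=
  (forall x, phi x != -oo%E) /\ (exists x, phi x != +oo%E).

Definition moreau_env {R : realType} {n : nat} (phi : 'rV[R]_n -> \bar R)
  (p gamma : R) (x : 'rV[R]_n) : \bar R :=
  ereal_inf [set (phi y + ((p * gamma)^-1 * (enorm (x - y)) `^ p)%:E)%E | y in setT].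

Definition hprox_bounded {R : realType} {n : nat} (phi : 'rV[R]_n -> \bar R) (p : R) : Prop :=
  exists gamma : R, 0 < gamma /\ exists x, (-oo < moreau_env phi p gamma x)%E.

(* liminf_{||x|| -> oo} phi(x)/||x||^p  :=  sup_r inf_{||x|| > r} phi(x)/||x||^p *)
Definition liminf_ratio {R : realType} {n : nat} (phi : 'rV[R]_n -> \bar R) (p : R) : \bar R :=
  ereal_sup [set ereal_inf [set (phi x * ((enorm x) `^ p)^-1%:E)%E | x in [set x | r < enorm x]]
            | r in [set: R]].

From HB Require Import structures.
From mathcomp Require Import all_boot all_order all_algebra.
From mathcomp Require Import all_classical all_reals all_analysis.
From mathcomp Require Import lra.
Set Implicit Arguments. Unset Strict Implicit. Unset Printing Implicit Defensive.
Import Order.TTheory GRing.Theory Num.Theory.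
Import numFieldNormedType.Exports.
Local Open Scope classical_set_scope.
Local Open Scope ring_scope.

(* All three conditions are compared with (b), the existence of a power
   minorant [phi >= m - l |.|^p].  The envelope at x0 is finite iff
   [phi + c |x0 - .|^p] is bounded below, and [|x0 - y|^p <= 2^p (|x0|^p + |y|^p)]
   moves the centre between x0 and 0.  A power minorant bounds [phi x / |x|^p]
   by [-|m| - l] for [|x| > 1]; conversely a finite liminf gives
   [phi x >= b |x|^p] outside some ball, and on the compact ball the lower
   semicontinuous [phi], which never takes the value -oo, is bounded below. *)

Definition has_power_minorant {R : realType} {n : nat}
    (phi : 'rV[R]_n -> \bar R) (p : R) : Prop :=
  exists l : R, 0 < l /\
    exists m : R, forall x, (m%:E <= phi x + (l * (enorm x) `^ p)%:E)%E.

Lemma lower_semicontinuous_compact_lbound (T : topologicalType) (R : realType)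
    (f : T -> \bar R) (K : set T) :
  compact K -> lower_semicontinuous f -> (forall x, f x != -oo%E) ->
  exists M : R, forall x, K x -> (M%:E <= f x)%E.
Proof.
move=> /compact_near_coveringP cK lsc fNy.
have : \forall N \near \oo, K `<=` (fun x => ((- N%:R)%:E < f x)%E).
  apply: (cK nat \oo (fun i x => ((- i%:R)%:E < f x)%E)) => x Kx.
  have [k fxk] : exists k : nat, ((- k%:R)%:E < f x)%E.
    case: (f x) (fNy x) => [r _| _|//]; last by exists 0%N; rewrite ltry.
    exists (Num.truncn `|r|).+1; rewrite lte_fin ltrNl.
    by apply: le_lt_trans (truncnS_gt _); rewrite -normrN ler_norm.
  have [V nV fV] := lsc x _ fxk.
  exists (V, [set i | (k <= i)%N]) => [|[y i] /= [Vy ki]]; first by split => //; exists k.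
  by apply: le_lt_trans (fV _ Vy); rewrite lee_fin lerN2 ler_nat.
move=> [N _ KN]; exists (- N%:R) => x Kx; exact/ltW/(KN N (leqnn N)).
Qed.

Lemma ereal_inf_gtNy_lbound (R : realType) (S : set \bar R) :
  (-oo < ereal_inf S)%E -> exists m : R, forall y, S y -> (m%:E <= y)%E.
Proof.
have lbS := @ereal_inf_lbound R S.
case: (ereal_inf S) lbS => [v| |//] lbS _; first by exists v.
by exists 0 => y /lbS; rewrite leye_eq => /eqP ->; rewrite leey.
Qed.

Section euclidean_norm.
Variables (R : realType) (n : nat).
Implicit Types x y : 'rV[R]_n.

Lemma enorm_ge0 x : 0 <= enorm x.
Proof. exact: sqrtr_ge0. Qed.

Lemma sqr_enorm x : enorm x ^+ 2 = \sum_(i < n) x ord0 i ^+ 2.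
Proof. by rewrite sqr_sqrtr //; apply: sumr_ge0 => i _; exact: sqr_ge0. Qed.

Lemma ler_coord_enorm x i : `|x ord0 i| <= enorm x.
Proof.
rewrite /enorm -sqrtr_sqr ler_wsqrtr // (bigD1 i) //= lerDl.
by apply: sumr_ge0 => j _; exact: sqr_ge0.
Qed.

Lemma enorm0B x : enorm (0 - x) = enorm x.
Proof.
by rewrite /enorm; congr Num.sqrt; apply: eq_bigr => i _; rewrite !mxE sub0r sqrrN.
Qed.

Lemma sqr_enormB_le x y : enorm (x - y) ^+ 2 <= 2 * (enorm x ^+ 2 + enorm y ^+ 2).
Proof.
rewrite !sqr_enorm -big_split mulr_sumr /=; apply: ler_sum => i _.
by rewrite !mxE; have := sqr_ge0 (x ord0 i + y ord0 i); nra.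
Qed.

Lemma enormB_le_max x y : enorm (x - y) <= 2 * Num.max (enorm x) (enorm y).
Proof.
move: (sqr_enormB_le x y) (enorm_ge0 x) (enorm_ge0 y) => xy2 x0 y0.
rewrite -(@ler_pXn2r _ 2) ?nnegrE ?mulr_ge0 ?le_max ?enorm_ge0 //.
by rewrite maxEle; case: (leP (enorm x) (enorm y)) => xy; nra.
Qed.

Lemma powR_enormB_le x y (p : R) : 0 <= p ->
  enorm (x - y) `^ p <= 2 `^ p * (enorm x `^ p + enorm y `^ p).
Proof.
move=> p0; apply: le_trans (_ : (2 * Num.max (enorm x) (enorm y)) `^ p <= _).
  apply: ge0_ler_powR (enormB_le_max x y) => //;
  by rewrite nnegrE ?enorm_ge0 ?mulr_ge0 ?le_max ?enorm_ge0.
rewrite powRM ?le_max ?enorm_ge0 // ler_wpM2l ?powR_ge0 //.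
by rewrite maxEle; case: (leP (enorm x) (enorm y)); rewrite ?lerDl ?lerDr powR_ge0.
Qed.

Lemma lower_semicontinuous_enorm_ball_lbound (phi : 'rV[R]_n -> \bar R) (r : R) :
  lower_semicontinuous phi -> (forall x, phi x != -oo%E) ->
  exists M : R, forall x, enorm x <= r -> (M%:E <= phi x)%E.
Proof.
move=> lsc phiNy.
have box_compact : compact [set x : 'rV[R]_n | forall i, `[- r, r]%classic (x ord0 i)].
  by apply: (@rV_compact R n (fun=> `[- r, r]%classic)) => i; exact: segment_compact.
have [M boxM] := lower_semicontinuous_compact_lbound box_compact lsc phiNy.
exists M => x xr; apply: boxM => i /=; rewrite in_itv /= -ler_norml.
exact: le_trans (ler_coord_enorm x i) xr.
Qed.

End euclidean_norm.

Section power_minorant.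
Variables (R : realType) (n : nat) (p : R) (phi : 'rV[R]_n -> \bar R).
Hypothesis phiNy : forall x, phi x != -oo%E.

Lemma hprox_bounded_power_minorant : 0 < p ->
  hprox_bounded phi p -> has_power_minorant phi p.
Proof.
move=> p0 [g [g0 [x0 /ereal_inf_gtNy_lbound [m0 envm0]]]].
set c := (p * g)^-1; have c0 : 0 < c by rewrite invr_gt0 mulr_gt0.
exists (c * 2 `^ p); split; first by rewrite mulr_gt0 // powR_gt0.
exists (m0 - c * 2 `^ p * enorm x0 `^ p) => y.
have : (m0%:E <= phi y + (c * enorm (x0 - y) `^ p)%:E)%E by apply: envm0; exists y.
have := ler_wpM2l (ltW c0) (powR_enormB_le x0 y (ltW p0)).
case: (phi y) (phiNy y) => [v _| _|//] cB; last by rewrite addye ?leey.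
by rewrite -!EFinD !lee_fin; nra.
Qed.

Lemma power_minorant_hprox_bounded : 0 < p ->
  has_power_minorant phi p -> hprox_bounded phi p.
Proof.
move=> p0 [l [l0 [m phim]]].
exists (p * l)^-1; split; first by rewrite invr_gt0 mulr_gt0.
exists 0; apply: lt_le_trans (ltNyr m) _.
apply: le_ereal_inf_tmp => _ [y _ <-].
by rewrite enorm0B invfM invrK mulrA mulVf ?gt_eqF // mul1r.
Qed.

Lemma power_minorant_liminf_ratio : 0 < p ->
  has_power_minorant phi p -> (-oo < liminf_ratio phi p)%E.
Proof.
move=> p0 [l [l0 [m phim]]].
apply: (lt_le_trans (ltNyr (- (`|m| + l)))).
apply: le_trans (ereal_sup_ubound _); last by exists 1.
apply: le_ereal_inf_tmp => _ [x /= x1 <-].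
have E1 : 1 <= enorm x `^ p.
  have := ge0_ler_powR (ltW p0) _ _ (ltW x1); rewrite powR1.
  by apply; rewrite nnegrE ?enorm_ge0.
have E0 : 0 < enorm x `^ p := lt_le_trans ltr01 E1.
move: (phim x); case: (phi x) (phiNy x) => [v _| _|//]; last first.
  by rewrite gt0_mulye ?leey // lte_fin invr_gt0.
rewrite -EFinD -EFinM !lee_fin ler_pdivlMr // => vm.
have : 0 <= `|m| * (enorm x `^ p - 1) by rewrite mulr_ge0 ?subr_ge0.
by have := ler_norm (- m); rewrite normrN; nra.
Qed.

Lemma liminf_ratio_power_minorant : lower_semicontinuous phi ->
  (-oo < liminf_ratio phi p)%E -> has_power_minorant phi p.
Proof.
move=> lsc /ereal_sup_gt[_ [r _ <-] /ereal_inf_gtNy_lbound [b ratio_b]].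
have {}ratio_b x : r < enorm x -> (b%:E <= phi x * ((enorm x `^ p)^-1)%:E)%E.
  by move=> xr; apply: ratio_b; exists x.
have [M ballM] := lower_semicontinuous_enorm_ball_lbound `|r| lsc phiNy.
exists (`|b| + 1); split; first by rewrite ltr_wpDl.
exists (- `|M|) => x; have E0 := powR_ge0 (enorm x) p.
have bE0 : 0 <= (`|b| + 1) * enorm x `^ p by rewrite mulr_ge0 ?ltr_wpDl.
have [xr|rx] := lerP (enorm x) `|r|.
  move: (ballM x xr); case: (phi x) (phiNy x) => [v _| _|//]; last by rewrite addye ?leey.
  by rewrite -EFinD !lee_fin; have := ler_norm (- M); rewrite normrN; lra.
have x0 : 0 < enorm x := le_lt_trans (normr_ge0 r) rx.
move: (ratio_b x (le_lt_trans (ler_norm r) rx)).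
case: (phi x) (phiNy x) => [v _| _|//]; last by rewrite addye ?leey.
rewrite -EFinM -EFinD !lee_fin ler_pdivlMr ?powR_gt0 // => bv.
have := ler_norm (- b); rewrite normrN.
by have := normr_ge0 M; nra.
Qed.

End power_minorant.

Theorem proposition1 (R : realType) (n : nat) (p : R) (phi : 'rV[R]_n -> \bar R) :
  1 < p -> proper_fun phi -> lower_semicontinuous phi ->
  (hprox_bounded phi p <->
     exists l : R, 0 < l /\ exists m : R, forall x, (m%:E <= phi x + (l * (enorm x) `^ p)%:E)%E)
  /\
  ((exists l : R, 0 < l /\ exists m : R, forall x, (m%:E <= phi x + (l * (enorm x) `^ p)%:E)%E)
     <-> (-oo < liminf_ratio phi p)%E).
Proof.
move=> p1 [phiNy _] lsc; have p0 : 0 < p := lt_trans ltr01 p1.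
split; split.
- exact: hprox_bounded_power_minorant.
- exact: power_minorant_hprox_bounded.
- exact: power_minorant_liminf_ratio.
- exact: liminf_ratio_power_minorant.
Qed.
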